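(* For all positive integers $k$, $n$ and $s$, $$\sum_{q\mid k}\bigl|c_q^{(s)}(n)\bigr|\le n\,2^{\omega(k)}.$$
   Context: For positive integers $a,b,s$, the generalized gcd $(a,b)_s$ is the largest $d^s$ ($d\in\mathbb{N}$) such that $d^s\mid a$ and $d^s\mid b$. The Cohen–Ramanujan sum is defined for positive integers $q,n,s$ by $$c_q^{(s)}(n)=\sum_{\substack{h=1\\ (h,q^s)_s=1}}^{q^s} e^{2\pi i n h/q^s}.$$ $\omega(k)$ denotes the number of distinct prime divisors of $k$; the sum is over the positive divisors $q$ of $k$. *)

From Stdlib Require Import Reals.
From Coquelicot Require Import Coquelicot.
From mathcomp Require Import all_boot.

Set Implicit Arguments.
Unset Strict Implicit.
Unset Printing Implicit Defensive.

(* Generalized gcd (a,b)_s : the largest d^s (d a natural number) with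
   d^s | a and d^s | b.  For a > 0, any such d satisfies d <= a, so it
   suffices to range over d < a.+1 (d = 0 never qualifies for a > 0). *)
Definition ggcd (a b s : nat) : nat :=
  ((\max_(d < a.+1 | (d ^ s %| a) && (d ^ s %| b)) d) ^ s)%N.

Definition e2pi (x : R) : C := (cos (2 * PI * x), sin (2 * PI * x))%R.

Definition cohen_ramanujan (s q n : nat) : C :=
  foldr Cplus (RtoC 0)
    (map (fun h => e2pi (INR (n * h) / INR (q ^ s))%R)
         (filter (fun h => ggcd h (q ^ s) s == 1%N) (iota 1 (q ^ s)))).

Definition omega (k : nat) : nat := size (primes k).

From Stdlib Require Import Reals Lra.
From Coquelicot Require Import Coquelicot.
From HB Require Import structures.
From mathcomp Require Import all_boot.

(* Inclusion-exclusion over the primes p | q, removing the h <= q^s with p^s | h, expresses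
   c_q^(s)(n) through complete exponential sums, and sum_(h = 1..Q) e(nh/Q) is Q if Q | n and 0
   otherwise.  Hence c^(s)(n) is multiplicative in q, and c_(p^(j+1))^(s)(n) is the difference
   of the complete sums for Q = p^((j+1)s) and Q = p^(js).  These vanish once p^(js) does not
   divide n, so for p^a || k the sum of |c_(p^j)^(s)(n)| over j <= a telescopes to at most
   2 p^(v_p(n)).  As c_r^(s)(n) only depends on the p'-part of n when p does not divide r,
   induction on the prime factors of k bounds the sum by prod_(p | k) 2 p^(v_p(n)) <= n 2^omega(k). *)

Lemma e2pi_add x y : e2pi (x + y) = Cmult (e2pi x) (e2pi y).
Proof.
rewrite /e2pi /Cmult /= Rmult_plus_distr_l cos_plus sin_plus.
by f_equal; ring.
Qed.

Lemma e2pi_nat (N : nat) : e2pi (INR N) = RtoC 1.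
Proof.
rewrite /e2pi /RtoC.
have -> : 2 * PI * INR N = 0 + 2 * INR N * PI by ring.
by rewrite cos_period sin_period cos_0 sin_0.
Qed.

Lemma Cmult_fixed z t : Cmult z t = t -> z = RtoC 1 \/ t = RtoC 0.
Proof.
move=> zt; case: (Ceq_dec t (RtoC 0)) => [->|t0]; [by right | left].
have -> : z = Cmult (Cmult z t) (Cinv t) by field.
by rewrite zt; field.
Qed.

Definition expsum (x : R) (m L : nat) : C :=
  foldr Cplus (RtoC 0) (map (fun h => e2pi (INR h * x)) (iota m L)).

Lemma e2pi_mul_expsum x m L : Cmult (e2pi x) (expsum x m L) = expsum x m.+1 L.
Proof.
elim: L m => [|L IH] m; first by rewrite /expsum /=; ring.
have e k : expsum x k L.+1 = Cplus (e2pi (INR k * x)) (expsum x k.+1 L) by [].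
rewrite !e Cmult_plus_distr_l IH -e2pi_add S_INR.
by congr (Cplus (e2pi _) _); ring.
Qed.

Lemma expsum_rcons x m L :
  expsum x m L.+1 = Cplus (expsum x m L) (e2pi (INR (m + L) * x)).
Proof.
rewrite /expsum -addn1 iotaD map_cat foldr_cat /=.
by elim: (iota m L) => [|a l IH] /=; [ring | rewrite IH; ring].
Qed.

(* Multiplying by e(x) shifts the window 1..Q to 2..Q+1, whose sum is the same because
   e((Q+1)x) = e(x). *)
Lemma expsum_root_of_unity x Q : e2pi (INR Q * x) = RtoC 1 ->
  e2pi x = RtoC 1 \/ expsum x 1 Q = RtoC 0.
Proof.
move=> eQ; apply: Cmult_fixed.
have eQ1 : e2pi (INR (1 + Q) * x) = e2pi x.
  by rewrite add1n S_INR Rmult_plus_distr_r Rmult_1_l Rplus_comm e2pi_add eQ; ring.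
have := expsum_rcons x 1 Q; rewrite eQ1 /expsum /= -/(expsum x 2 Q) Rmult_1_l.
rewrite e2pi_mul_expsum => e.
have -> : expsum x 2 Q = Cplus (Copp (e2pi x)) (Cplus (e2pi x) (expsum x 2 Q)) by ring.
by rewrite e; ring.
Qed.

Lemma cos_2PI_frac_neq1 (n Q : nat) : (0 < Q)%N -> ~~ (Q %| n)%N ->
  cos (2 * PI * (INR n / INR Q)) <> 1.
Proof.
move=> Q0 Qn.
have hQ : 0 < INR Q by apply: lt_0_INR; apply/ltP.
have hr : 0 < INR (n %% Q) by apply: lt_0_INR; apply/ltP; rewrite lt0n.
have hrQ : INR (n %% Q) < INR Q by apply: lt_INR; apply/ltP; rewrite ltn_pmod.
have -> : 2 * PI * (INR n / INR Q)
          = 2 * (PI * INR (n %% Q) / INR Q) + 2 * INR (n %/ Q) * PI.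
  rewrite {1}(divn_eq n Q) plus_INR mult_INR; field; lra.
rewrite cos_period cos_2a_sin.
suff : 0 < sin (PI * INR (n %% Q) / INR Q) by nra.
have := PI_RGT_0 => PI0; apply: sin_gt_0.
  by apply: Rdiv_lt_0_compat => //; apply: Rmult_lt_0_compat.
apply/(Rmult_lt_reg_r (INR Q)) => //.
rewrite /Rdiv Rmult_assoc Rinv_l; last lra.
by rewrite Rmult_1_r; apply: Rmult_lt_compat_l.
Qed.

Lemma foldr_Cplus_ones (l : seq nat) (f : nat -> C) :
  {in l, forall h, f h = RtoC 1} ->
  foldr Cplus (RtoC 0) (map f l) = RtoC (INR (size l)).
Proof.
elim: l => [|a l IH] f1 //.
rewrite [size _]/= S_INR /= IH => [|h hl]; last by apply: f1; rewrite inE hl orbT.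
by rewrite f1 ?inE ?eqxx //; apply: injective_projections => /=; ring.
Qed.

Definition esum (n Q : nat) (L : seq nat) : C :=
  foldr Cplus (RtoC 0) (map (fun h => e2pi (INR (n * h) / INR Q)) L).

Definition full_sum (n Q : nat) : R := if (Q %| n)%N then INR Q else 0.

Lemma esum_iota n Q : (0 < Q)%N -> esum n Q (iota 1 Q) = RtoC (full_sum n Q).
Proof.
move=> Q0.
have hQ : INR Q <> 0 by apply: not_0_INR; apply/eqP; rewrite -lt0n.
have -> : esum n Q (iota 1 Q) = expsum (INR n / INR Q) 1 Q.
  by congr foldr; apply: eq_map => h; rewrite mult_INR; congr e2pi; field.
rewrite /full_sum; case: ifP => Qn.
  rewrite /expsum foldr_Cplus_ones ?size_iota // => h _.
  case/dvdnP: Qn => N ->; rewrite mult_INR.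
  have -> : INR h * (INR N * INR Q / INR Q) = INR (h * N) by rewrite mult_INR; field.
  exact: e2pi_nat.
have eQ : e2pi (INR Q * (INR n / INR Q)) = RtoC 1.
  have -> : INR Q * (INR n / INR Q) = INR n by field.
  exact: e2pi_nat.
case: (expsum_root_of_unity _ _ eQ) => [[e1 _]|//].
by case: (cos_2PI_frac_neq1 n Q Q0 (negbT Qn)).
Qed.

Lemma esum_cons n Q x L :
  esum n Q (x :: L) = Cplus (e2pi (INR (n * x) / INR Q)) (esum n Q L).
Proof. by []. Qed.

Lemma esum_filter_split n Q (a : pred nat) L :
  esum n Q L = Cplus (esum n Q (filter a L)) (esum n Q (filter (predC a) L)).
Proof.
elim: L => [|x L IH] /=; first by rewrite /esum /=; ring.
by case: (a x); rewrite /= !esum_cons IH; ring.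
Qed.

Lemma esum_muln n d M L : (0 < d)%N -> (0 < M)%N ->
  esum n (d * M) (map (muln d) L) = esum n M L.
Proof.
move=> d0 M0; rewrite /esum -map_comp; congr foldr; apply: eq_map => h /=.
have hd : INR d <> 0 by apply: not_0_INR; apply/eqP; rewrite -lt0n.
have hM : INR M <> 0 by apply: not_0_INR; apply/eqP; rewrite -lt0n.
by rewrite !mult_INR; congr e2pi; field.
Qed.

Lemma filter_dvdn_iota d M : (0 < d)%N ->
  filter (dvdn d) (iota 1 (d * M)) = map (muln d) (iota 1 M).
Proof.
case: d => // d _; elim: M => [|M IH]; first by rewrite muln0.
rewrite mulnS addnC iotaD filter_cat IH -[M.+1]addn1 iotaD map_cat.
congr (_ ++ _); set X := (d.+1 * M)%N.
have -> : iota (1 + X) d.+1 = map (addn X) (iota 1 d) ++ [:: X + d.+1]%N.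
  by rewrite -[d.+1]addn1 iotaD addnC iotaDl /= -addnA (addnC 1%N d).
rewrite filter_cat filter_map /= dvdn_addr ?dvdn_mulr // dvdnn /= [(X + _)%N]addnC -mulnS add1n.
rewrite (eq_in_filter (a2 := pred0)) ?filter_pred0 // => r.
by rewrite mem_iota => /andP[r1 rd]; rewrite /= dvdn_addr ?dvdn_mulr // gtnNdvd.
Qed.

Definition pfree (s : nat) (P : seq nat) (h : nat) : bool :=
  all (fun p => ~~ (p ^ s %| h)%N) P.

Definition pows_dvd (s : nat) (P : seq nat) (Q : nat) : bool :=
  all (fun p => p ^ s %| Q)%N P.

Definition coprime_esum (s n : nat) (P : seq nat) (Q : nat) : C :=
  esum n Q (filter (pfree s P) (iota 1 Q)).

(* ie_sum s n P Q = sum over the subsets S of P of (-1)^|S| full_sum n (Q / prod_(p in S) p^s). *)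
Fixpoint ie_sum (s n : nat) (P : seq nat) (Q : nat) : R :=
  if P is p :: P' then ie_sum s n P' Q - ie_sum s n P' (Q %/ p ^ s)
  else full_sum n Q.

Lemma coprime_pexp_primes s p q : prime p -> prime q -> p != q ->
  coprime (p ^ s) (q ^ s).
Proof.
by move=> pp pq neq; apply/coprimeXl/coprimeXr; rewrite prime_coprime // dvdn_prime2.
Qed.

Section CoprimeToPrimes.
Variables (s : nat) (p : nat) (P : seq nat).
Hypotheses (P_prime : all prime P) (p_prime : prime p) (p_notin_P : p \notin P).

Lemma coprime_pexp_primes_in x : x \in P -> coprime (x ^ s) (p ^ s).
Proof.
move=> xP; apply: coprime_pexp_primes => //; first exact: (allP P_prime).
by apply: contraNneq p_notin_P => <-.
Qed.

Lemma pfree_pexp_mull h : pfree s P (p ^ s * h) = pfree s P h.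
Proof.
by apply: eq_in_all => x xP /=; rewrite Gauss_dvdr // coprime_pexp_primes_in.
Qed.

Lemma pows_dvd_divn Q : (p ^ s %| Q)%N -> pows_dvd s P Q -> pows_dvd s P (Q %/ p ^ s).
Proof.
move=> pQ /allP PQ; apply/allP => x xP.
by have := PQ x xP; rewrite -{1}(divnK pQ) Gauss_dvdl // coprime_pexp_primes_in.
Qed.

Lemma coprime_esum_cons n Q : (p ^ s %| Q)%N -> (0 < Q)%N ->
  coprime_esum s n (p :: P) Q
  = Cminus (coprime_esum s n P Q) (coprime_esum s n P (Q %/ p ^ s)).
Proof.
move=> pQ Q0; set M := (Q %/ p ^ s)%N.
have ps0 : (0 < p ^ s)%N by rewrite expn_gt0 prime_gt0.
have QM : Q = (p ^ s * M)%N by rewrite /M mulnC divnK.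
have M0 : (0 < M)%N by move: Q0; rewrite QM muln_gt0 => /andP[].
have divisible : filter (dvdn (p ^ s)) (filter (pfree s P) (iota 1 Q))
                 = map (muln (p ^ s)) (filter (pfree s P) (iota 1 M)).
  rewrite -filter_predI (eq_filter (a2 := predI (pfree s P) (dvdn (p ^ s)))).
    by rewrite filter_predI {1}QM filter_dvdn_iota // filter_map (eq_filter pfree_pexp_mull).
  by move=> h /=; rewrite andbC.
rewrite /coprime_esum [esum n Q (filter (pfree s P) _)](esum_filter_split n Q (dvdn (p ^ s))).
rewrite divisible -(esum_muln n (p ^ s) M _ ps0 M0) -QM -filter_predI.
rewrite (eq_filter (a1 := predI _ _) (a2 := pfree s (p :: P))) //.
by ring.
Qed.

End CoprimeToPrimes.

Lemma coprime_esum_ie s n P Q : uniq P -> all prime P -> pows_dvd s P Q -> (0 < Q)%N ->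
  coprime_esum s n P Q = RtoC (ie_sum s n P Q).
Proof.
elim: P Q => [|p P IH] Q /=.
  move=> _ _ _ Q0; rewrite /coprime_esum (eq_filter (a2 := predT)) // filter_predT.
  exact: esum_iota.
move=> /andP[pP uP] /andP[pp aP] /andP[pQ aQ] Q0.
have M0 : (0 < Q %/ p ^ s)%N by rewrite divn_gt0 ?expn_gt0 ?prime_gt0 // dvdn_leq.
rewrite coprime_esum_cons // !IH // ?pows_dvd_divn //.
by apply: injective_projections => /=; ring.
Qed.

Lemma ggcd_pexp_eq1 h q s : (0 < h)%N -> (0 < q)%N -> (0 < s)%N ->
  (ggcd h (q ^ s) s == 1)%N = pfree s (primes q) h.
Proof.
move=> h0 q0 s0; rewrite /ggcd -{1}(exp1n s) eqn_exp2r //.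
pose D := fun d : 'I_h.+1 => ((d ^ s %| h) && (d ^ s %| q ^ s))%N.
apply/eqP/allP => [maxD1 p | free_h].
- rewrite mem_primes => /and3P[pp _ pq]; apply/negP => psh.
  have ph : (p < h.+1)%N.
    rewrite ltnS (leq_trans _ (dvdn_leq h0 psh)) // -{1}[p]expn1.
    by apply: leq_pexp2l => //; apply: prime_gt0.
  have := @leq_bigmax_cond _ D (fun d => nat_of_ord d) (Ordinal ph).
  rewrite /D /= psh dvdn_pexp2r // pq maxD1 => /(_ isT).
  by rewrite leqNgt prime_gt1.
- apply/eqP; rewrite eqn_leq; apply/andP; split.
    apply/bigmax_leqP => d /andP[dh dq]; rewrite leqNgt; apply/negP => d1.
    rewrite dvdn_pexp2r // in dq.
    have : pdiv d \in primes q by rewrite mem_primes pdiv_prime // q0 (dvdn_trans (pdiv_dvd d)).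
    by move/free_h/negP; apply; apply: dvdn_trans dh; apply: dvdn_exp2r; apply: pdiv_dvd.
  have o1 : (1 < h.+1)%N by rewrite ltnS.
  have := @leq_bigmax_cond _ D (fun d => nat_of_ord d) (Ordinal o1).
  by rewrite /D /= exp1n !dvd1n => /(_ isT).
Qed.

Lemma pows_dvd_primes s q : pows_dvd s (primes q) (q ^ s).
Proof. by apply/allP => x; rewrite mem_primes => /and3P[_ _ xq]; apply: dvdn_exp2r. Qed.

Definition cr (s n q : nat) : R := ie_sum s n (primes q) (q ^ s).

Lemma cohen_ramanujanE s q n : (0 < q)%N -> (0 < s)%N ->
  cohen_ramanujan s q n = RtoC (cr s n q).
Proof.
move=> q0 s0; rewrite -coprime_esum_ie ?primes_uniq ?all_prime_primes ?pows_dvd_primes //;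
  last by rewrite expn_gt0 q0.
rewrite /cohen_ramanujan /coprime_esum /esum; congr (foldr _ _ (map _ _)).
by apply: eq_in_filter => h; rewrite mem_iota => /andP[h0 _]; apply: ggcd_pexp_eq1.
Qed.

Lemma ie_sum_eq_mem s n P P' Q : uniq P -> uniq P' -> P =i P' ->
  all prime P -> pows_dvd s P Q -> (0 < Q)%N -> ie_sum s n P Q = ie_sum s n P' Q.
Proof.
move=> uP uP' PP' aP dP Q0.
have aP' : all prime P' by rewrite -(eq_all_r PP').
have dP' : pows_dvd s P' Q by rewrite /pows_dvd -(eq_all_r PP').
have : coprime_esum s n P Q = coprime_esum s n P' Q.
  by congr esum; apply: eq_filter => h; apply: eq_all_r.
by rewrite !coprime_esum_ie // => -[].
Qed.

Lemma full_sum_mul n d Q : coprime d Q ->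
  full_sum n (d * Q) = full_sum n d * full_sum n Q.
Proof.
move=> dQ; rewrite /full_sum Gauss_dvd //.
by case: (d %| n)%N; case: (Q %| n)%N; rewrite /= ?mult_INR; ring.
Qed.

Lemma ie_sum_mul s n P d Q : uniq P -> all prime P -> pows_dvd s P Q -> coprime d Q ->
  ie_sum s n P (d * Q) = full_sum n d * ie_sum s n P Q.
Proof.
elim: P Q => [|p P IH] Q /=; first by move=> _ _ _; apply: full_sum_mul.
move=> /andP[pP uP] /andP[pp aP] /andP[pQ dQ] cdQ.
rewrite -muln_divA // !IH ?pows_dvd_divn //; first ring.
by apply: coprime_dvdr cdQ; apply: dvdn_div.
Qed.

Lemma ie_sum_part_coprime s n p P Q : (0 < n)%N -> prime p ->
  uniq P -> all prime P -> pows_dvd s P Q -> coprime Q p ->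
  ie_sum s n P Q = ie_sum s n`_p^' P Q.
Proof.
move=> n0 pp; elim: P Q => [|x P IH] Q /=.
  move=> _ _ _ Qp; rewrite /full_sum -{1}(partnC p n0) Gauss_dvdr // p_part.
  exact: coprimeXr.
move=> /andP[xP uP] /andP[xp aP] /andP[xQ dQ] Qp.
rewrite !IH ?pows_dvd_divn //.
by apply: coprime_dvdl Qp; apply: dvdn_div.
Qed.

Lemma primes_pexp_mul p j r : prime p -> (0 < r)%N ->
  primes (p ^ j.+1 * r) =i p :: primes r.
Proof.
by move=> pp r0 x; rewrite primesM ?r0 ?expn_gt0 ?prime_gt0 // primesX // primes_prime // inE.
Qed.

Lemma cr_pexp_mul s n p j r : prime p -> (0 < r)%N -> ~~ (p %| r)%N ->
  cr s n (p ^ j.+1 * r)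
  = (full_sum n ((p ^ j.+1) ^ s) - full_sum n ((p ^ j) ^ s)) * cr s n r.
Proof.
move=> pp r0 pr; rewrite /cr.
have ps0 : (0 < p ^ s)%N by rewrite expn_gt0 prime_gt0.
have q0 : (0 < p ^ j.+1 * r)%N by rewrite muln_gt0 expn_gt0 prime_gt0.
have uniq_pr : uniq (p :: primes r) by rewrite /= mem_primes pp r0 pr primes_uniq.
rewrite (@ie_sum_eq_mem s n _ (p :: primes r)) ?primes_uniq ?all_prime_primes
  ?pows_dvd_primes ?expn_gt0 ?q0 //=; last exact: primes_pexp_mul.
have cpr k : coprime ((p ^ k) ^ s) (r ^ s).
  by apply/coprimeXl/coprimeXr/coprimeXl; rewrite prime_coprime.
have -> : ((p ^ j.+1 * r) ^ s %/ p ^ s = (p ^ j) ^ s * r ^ s)%N.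
  by rewrite expnMn expnS expnMn -mulnA mulKn.
rewrite expnMn !ie_sum_mul ?primes_uniq ?all_prime_primes ?pows_dvd_primes //.
ring.
Qed.

Lemma cr_part_coprime s n p r : (0 < n)%N -> prime p -> ~~ (p %| r)%N ->
  cr s n r = cr s n`_p^' r.
Proof.
move=> n0 pp pr; apply: ie_sum_part_coprime;
  rewrite ?primes_uniq ?all_prime_primes ?pows_dvd_primes //.
by apply/coprimeXl; rewrite coprime_sym prime_coprime.
Qed.

Lemma pNdvd_divisors_partC p k r : prime p -> r \in divisors k`_p^' -> ~~ (p %| r)%N.
Proof.
by move=> pp; rewrite -dvdn_divisors ?part_gt0 // => rk; rewrite -p'natE // (pnat_dvd rk) ?part_pnat.
Qed.

Lemma perm_divisors_pfactor p k : prime p -> (0 < k)%N ->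
  perm_eq (divisors k)
    [seq (p ^ j * r)%N | j <- iota 0 (logn p k).+1, r <- divisors k`_p^'].
Proof.
move=> pp k0; have p0 := prime_gt0 pp.
have m0 : (0 < k`_p^')%N by apply: part_gt0.
have kE : k = (p ^ logn p k * k`_p^')%N by rewrite -p_part partnC.
have coprime_p r : r \in divisors k`_p^' -> coprime p r.
  by rewrite prime_coprime //; apply: pNdvd_divisors_partC.
have logn_pexp_mul j r : r \in divisors k`_p^' -> logn p (p ^ j * r) = j.
  move=> rm; have r0 : (0 < r)%N by apply: dvdn_gt0 m0 _; rewrite dvdn_divisors.
  by rewrite lognM ?expn_gt0 ?p0 // pfactorK // logn_coprime ?addn0 ?coprime_p.
apply: uniq_perm; first exact: divisors_uniq.
  apply: allpairs_uniq; [exact: iota_uniq | exact: divisors_uniq |].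
  move=> [j r] [j' r'] /allpairsP[[j1 r1] [_ r1m [-> ->]]].
  move=> /allpairsP[[j2 r2] [_ r2m [-> ->]]] /= e.
  have ej : j1 = j2 by rewrite -(logn_pexp_mul j1 r1) // e logn_pexp_mul.
  by move: e; rewrite ej => /eqP; rewrite eqn_pmul2l ?expn_gt0 ?p0 // => /eqP ->.
move=> d; apply/idP/allpairsP.
- rewrite -dvdn_divisors // => dk; have d0 : (0 < d)%N by apply: dvdn_gt0 dk.
  exists (logn p d, d`_p^'); split; last by rewrite -p_part partnC.
    rewrite mem_iota add0n ltnS -pfactor_dvdn // (dvdn_trans _ dk) //.
    by rewrite -p_part dvdn_part.
  by rewrite -dvdn_divisors // partn_dvd.
- move=> [[j r] [jI rm ->]]; rewrite -dvdn_divisors // kE /=.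
  apply: dvdn_mul; last by rewrite dvdn_divisors.
  by rewrite dvdn_Pexp2l ?prime_gt1 // -ltnS; move: jI; rewrite mem_iota.
Qed.

Lemma omega_part p k : prime p -> (p %| k)%N -> (0 < k)%N ->
  omega k = (omega k`_p^').+1.
Proof.
move=> pp pk k0; rewrite /omega primes_part.
have -> : size (primes k) = size (p :: [seq x <- primes k | x \in p^']).
  apply/perm_size/uniq_perm; first exact: primes_uniq.
    by rewrite /= filter_uniq ?primes_uniq // andbT mem_filter !inE eqxx.
  move=> x; rewrite inE mem_filter !inE.
  by case: (eqVneq x p) => [->|] //=; rewrite mem_primes pp k0 pk.
by [].
Qed.

Lemma Rplus_assoc_law : associative Rplus.
Proof. by move=> x y z; rewrite Rplus_assoc. Qed.

HB.instance Definition _ :=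
  Monoid.isComLaw.Build R 0 Rplus Rplus_assoc_law Rplus_comm Rplus_0_l.

Lemma big_Rmult_distr_l (l : seq nat) (c : R) (F : nat -> R) :
  \big[Rplus/0]_(x <- l) (c * F x) = c * \big[Rplus/0]_(x <- l) F x.
Proof. by elim: l => [|a l IH]; rewrite ?big_nil ?big_cons ?IH; ring. Qed.

Lemma big_Rabs_ge0 (l : seq nat) (F : nat -> R) :
  0 <= \big[Rplus/0]_(x <- l) Rabs (F x).
Proof.
elim: l => [|a l IH]; rewrite ?big_nil ?big_cons; first lra.
by have := Rabs_pos (F a); lra.
Qed.

Lemma sum_abs_cr_divisors_pfactor s n p k : prime p -> (0 < k)%N ->
  \big[Rplus/0]_(q <- divisors k) Rabs (cr s n q)
  = (1 + \big[Rplus/0]_(0 <= j < logn p k)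
           Rabs (full_sum n ((p ^ j.+1) ^ s) - full_sum n ((p ^ j) ^ s)))
    * \big[Rplus/0]_(r <- divisors k`_p^') Rabs (cr s n r).
Proof.
move=> pp k0; rewrite (perm_big _ (perm_divisors_pfactor p k pp k0)) big_allpairs_dep /=.
have -> : iota 1 (logn p k) = index_iota 1 (logn p k).+1 by rewrite /index_iota subn1.
rewrite big_cons big_add1 Rmult_plus_distr_r Rmult_1_l Rmult_comm -big_Rmult_distr_l.
under eq_bigr do rewrite expn0 mul1n; congr Rplus.
apply: eq_bigr => j _; rewrite Rmult_comm -big_Rmult_distr_l; apply: eq_big_seq => r rm.
have r0 : (0 < r)%N by apply: dvdn_gt0 (part_gt0 p^' k) _; rewrite dvdn_divisors ?part_gt0.
by rewrite cr_pexp_mul ?(pNdvd_divisors_partC p k) // Rabs_mult Rmult_comm.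
Qed.

Lemma INR_pexp_le_part n p a : (0 < n)%N -> prime p -> (p ^ a %| n)%N ->
  INR (p ^ a) <= INR n`_p.
Proof.
move=> n0 pp pan; apply/le_INR/leP.
by rewrite p_part; apply: leq_pexp2l; rewrite ?prime_gt0 // -pfactor_dvdn.
Qed.

(* full_sum n (p^(js)) increases as p^(js) while p^(js) | n and is 0 afterwards, so the total
   variation is at most the last nonzero value plus one jump down from it. *)
Lemma full_sum_pexp_variation_le n p s a : (0 < n)%N -> prime p ->
  1 + \big[Rplus/0]_(0 <= j < a)
        Rabs (full_sum n ((p ^ j.+1) ^ s) - full_sum n ((p ^ j) ^ s))
  <= 2 * INR n`_p.
Proof.
move=> n0 pp.
suff : 1 + \big[Rplus/0]_(0 <= j < a)
             Rabs (full_sum n ((p ^ j.+1) ^ s) - full_sum n ((p ^ j) ^ s))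
       <= if ((p ^ a) ^ s %| n)%N then INR ((p ^ a) ^ s) else 2 * INR n`_p.
  case: ifP => // pan; rewrite -expnM in pan *.
  by have := INR_pexp_le_part n p _ n0 pp pan; have := pos_INR (p ^ (a * s)); lra.
elim: a => [|a IH]; first by rewrite big_geq // expn0 exp1n dvd1n /=; lra.
rewrite big_nat_recr //= [full_sum n ((p ^ a.+1) ^ s)]/full_sum
  [full_sum n ((p ^ a) ^ s)]/full_sum.
have dvd_prev : ((p ^ a.+1) ^ s %| n)%N -> ((p ^ a) ^ s %| n)%N.
  by apply: dvdn_trans; rewrite dvdn_exp2r // dvdn_exp2l.
case: ifP => [pa1n | _].
  rewrite (dvd_prev pa1n) in IH *.
  have : INR ((p ^ a) ^ s) <= INR ((p ^ a.+1) ^ s).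
    apply/le_INR/leP/dvdn_leq; first by rewrite !expn_gt0 prime_gt0.
    by rewrite dvdn_exp2r // dvdn_exp2l.
  by move=> ?; rewrite Rabs_right; lra.
case: ifP IH => pan IH; last by rewrite Rminus_0_r Rabs_R0; lra.
rewrite -expnM in pan; have := INR_pexp_le_part n p _ n0 pp pan; rewrite expnM.
by rewrite Rminus_0_l Rabs_Ropp Rabs_right; [lra | apply/Rle_ge/pos_INR].
Qed.

Lemma sum_abs_cr_le s n k : (0 < k)%N -> (0 < n)%N ->
  \big[Rplus/0]_(q <- divisors k) Rabs (cr s n q) <= INR n * 2 ^ omega k.
Proof.
elim/ltn_ind: k n => k IH n k0 n0.
case: (ltngtP k 1) => [|k1|->]; first by rewrite ltnNge k0.
  have pp := pdiv_prime k1; have pk := pdiv_dvd k; set p := pdiv k in pp pk *.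
  have m_lt_k : (k`_p^' < k)%N.
    by rewrite -{2}(partnC p k0) ltn_Pmull ?part_gt0 // p_part_gt1 pi_pdiv.
  have IHm := IH _ m_lt_k n`_p^' (part_gt0 _ _) (part_gt0 _ _).
  have variation := full_sum_pexp_variation_le n p s (logn p k) n0 pp.
  have sum_ge0 := big_Rabs_ge0 (index_iota 0 (logn p k))
    (fun j => full_sum n ((p ^ j.+1) ^ s) - full_sum n ((p ^ j) ^ s)).
  have -> : INR n = INR n`_p * INR n`_p^'.
    by rewrite -mult_INR multE (partnC p n0).
  rewrite (sum_abs_cr_divisors_pfactor s n p k pp k0) (omega_part p k pp pk k0) /=.
  have -> : \big[Rplus/0]_(r <- divisors k`_p^') Rabs (cr s n r)
            = \big[Rplus/0]_(r <- divisors k`_p^') Rabs (cr s n`_p^' r).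
    apply: eq_big_seq => r rm.
    by rewrite (cr_part_coprime s n p r n0 pp (pNdvd_divisors_partC p k r pp rm)).
  have -> : INR n`_p * INR n`_p^' * (2 * 2 ^ omega k`_p^')
            = (2 * INR n`_p) * (INR n`_p^' * 2 ^ omega k`_p^') by ring.
  by apply: Rmult_le_compat => //; [lra | apply: big_Rabs_ge0].
rewrite /= big_seq1 /cr /= exp1n /full_sum dvd1n Rabs_R1.
have : 1 <= INR n by apply: (le_INR 1); apply/leP.
lra.
Qed.

Theorem theorem1 (k n s : nat) :
  (0 < k)%N -> (0 < n)%N -> (0 < s)%N ->
  (foldr Rplus (IZR 0) (map (fun q => Cmod (cohen_ramanujan s q n)) (divisors k))
     <= INR n * pow 2 (omega k))%R.
Proof.
move=> k0 n0 s0; rewrite foldrE big_map.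
rewrite (eq_big_seq (fun q => Rabs (cr s n q))); first exact: sum_abs_cr_le.
move=> q; rewrite -dvdn_divisors // => qk.
by rewrite cohen_ramanujanE ?Cmod_R // (dvdn_gt0 k0 qk).
Qed.
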